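(* Consider the algorithmic framework described below, with arbitrary parameters $\xi>1$, $\gamma\in(0,1)$, $\eta\ge 1$, in either its non-amortized or amortized variant. At all times (after the first job has arrived and after each insertion procedure), the current guess $T$ satisfies $\xi^{-1}T<\mathrm{OPT}(I^* )$, where $I^*$ is the instance consisting of all jobs arrived so far.
   Context: Problem: machines $1,\dots,m$ with speeds $s_1\ge s_2\ge\dots\ge s_m>0$; jobs arrive online, job $j$ has size $p_j>0$; the load of job $j$ on machine $i$ is $p_j/s_i$; $\mathrm{OPT}(I^* )$ is the minimum possible maximum machine load over all assignments of the jobs of $I^*$ to machines. Framework: it keeps a guess $T$, and for each machine $i$ a partition of its jobs into old jobs $\hat J_i$ and new jobs $\check J_i$; in the amortized variant also a potential $\pi_i$ per machine. Machine $i$ is saturated if $\check\ell_i:=\sum_{j\in\check J_i}p_j/s_i\ge T$, and $\eta$-eligible for job $j$ if $p_j/s_i\le \eta T$. Let $\tilde{\mathcal M}(\eta,j)$ be the set of machines that are $\eta$-eligible for $j$ and not saturated. When the first job $j_1$ arrives, set $T=p_{j_1}/s_1$ and place $j_1$ on machine 1. When a later job $j^*$ arrives, put it into a priority queue $Q$ (larger size = higher priority) and run: while $Q$ is nonempty, remove the largest job $j'$ from $Q$; then repeat: if $\tilde{\mathcal M}(\eta,j')\ne\emptyset$, choose a slowest machine $i'$ in it, move every $j\in\hat J_{i'}$ with $p_j\ge \eta^{-1}p_{j'}$ from $\hat J_{i'}$ to $\check J_{i'}$, and if $i'$ is still not saturated stop repeating; otherwise (if $\tilde{\mathcal M}(\eta,j')=\emptyset$)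 set $T:=\xi T$ and for every machine $i$ move all jobs of $\check J_i$ to $\hat J_i$ (and, in the amortized variant, set $\pi_i=0$). After a machine $i'$ is found, set $\pi:=\gamma p_{j'}$ (amortized variant: $\pi:=\gamma p_{j'}+\pi_{i'}$); go through the jobs $j\in\hat J_{i'}$ in non-increasing order of size and, whenever $p_j\le\pi$, set $\pi:=\pi-p_j$ and move $j$ from $\hat J_{i'}$ into $Q$ (i.e., remove it from machine $i'$ to be reinserted). Finally assign $j'$ to $i'$ by adding it to $\check J_{i'}$ (amortized variant: and set $\pi_{i'}:=\pi$). *)

From HB Require Import structures.
From mathcomp Require Import all_boot all_order all_algebra.
Set Implicit Arguments.
Unset Strict Implicit.
Unset Printing Implicit Defensive.
Import Order.TTheory GRing.Theory Num.Theory.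
Local Open Scope ring_scope.

(* Jobs are identified by their arrival index 0,1,2,...; job j has size p j.
   Machines are 'I_m (machine "1" of the paper is the ordinal 0). *)

(* Control phase of the algorithm:
   PQueue Q      : the outer while-loop with priority queue Q
                   (PQueue [::] = idle, waiting for the next arrival);
   PSearch j' Q  : inside the inner "repeat" loop for the removed job j'. *)
Inductive phase := PQueue of seq nat | PSearch of nat & seq nat.

(* Full state: guess T, old jobs \hat J_i, new jobs \check J_i, potentials
   pi_i, control phase, and number of jobs arrived so far. *)
Record state (R : Type) (m : nat) := St {
  sT   : R;
  shat : 'I_m -> seq nat;
  schk : 'I_m -> seq nat;
  spot : 'I_m -> R;
  sph  : phase;
  sn   : nat }.

Definition upd (T : Type) (m : nat) (f : 'I_m -> T) (i : 'I_m) (x : T) :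
  'I_m -> T := fun k => if k == i then x else f k.

Fixpoint evict (R : realFieldType) (p : nat -> R) (pi : R) (L : seq nat)
  : seq nat * seq nat * R :=
  match L with
  | [::] => ([::], [::], pi)
  | j :: L' =>
      if p j <= pi then
        let: (k, e, pi') := evict p (pi - p j) L' in (k, j :: e, pi')
      else
        let: (k, e, pi') := evict p pi L' in (j :: k, e, pi')
  end.

Section Algo.
Variables (R : realFieldType) (m : nat) (s : 'I_m -> R) (p : nat -> R).
Variables (xi gamma eta : R) (amortized : bool).

Definition newload (st : state R m) (i : 'I_m) : R :=
  \sum_(j <- schk st i) p j / s i.

Definition saturated (st : state R m) (i : 'I_m) : bool :=
  sT st <= newload st i.

Definition eligible (st : state R m) (j : nat) (i : 'I_m) : bool :=
  p j / s i <= eta * sT st.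

Definition Mtil (st : state R m) (j : nat) (i : 'I_m) : bool :=
  eligible st j i && ~~ saturated st i.

Definition initial (st : state R m) : Prop :=
  sn st = 1%N /\ sph st = PQueue [::] /\
  forall i : 'I_m,
    shat st i = [::] /\ spot st i = 0 /\
    (if val i == 0%N then schk st i = [:: 0%N] /\ sT st = p 0 / s i
     else schk st i = [::]).

Inductive step : state R m -> state R m -> Prop :=
  | step_arrive T hat chk pot n :
      step (St T hat chk pot (PQueue [::]) n)
           (St T hat chk pot (PQueue [:: n]) n.+1)
  | step_pop T hat chk pot Q n j :
      j \in Q -> (forall j0, j0 \in Q -> p j0 <= p j) ->
      step (St T hat chk pot (PQueue Q) n)
           (St T hat chk pot (PSearch j (rem j Q)) n)
  (* \tilde M nonempty: slowest machine i, move big old jobs to new jobs;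
     i became saturated, so repeat *)
  | step_move_repeat st j Q i :
      sph st = PSearch j Q ->
      Mtil st j i -> (forall k, Mtil st j k -> s i <= s k) ->
      let big := [seq x <- shat st i | eta^-1 * p j <= p x] in
      let small := [seq x <- shat st i | ~~ (eta^-1 * p j <= p x)] in
      let st1 := St (sT st) (upd (shat st) i small)
                    (upd (schk st) i (schk st i ++ big)) (spot st)
                    (PSearch j Q) (sn st) in
      saturated st1 i ->
      step st st1
  (* \tilde M nonempty: slowest machine i, move big old jobs; i still not
     saturated, so i' := i is found; evict greedily and assign j' to i *)
  | step_move_found st j Q i L :
      sph st = PSearch j Q ->
      Mtil st j i -> (forall k, Mtil st j k -> s i <= s k) ->
      let big := [seq x <- shat st i | eta^-1 * p j <= p x] in
      let small := [seq x <- shat st i | ~~ (eta^-1 * p j <= p x)] in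
      let st1 := St (sT st) (upd (shat st) i small)
                    (upd (schk st) i (schk st i ++ big)) (spot st)
                    (PSearch j Q) (sn st) in
      ~~ saturated st1 i ->
      perm_eq L small -> sorted (fun a b => p b <= p a) L ->
      let pi0 := gamma * p j + (if amortized then spot st i else 0) in
      let res := evict p pi0 L in
      step st (St (sT st) (upd (shat st) i res.1.1)
                  (upd (schk st1) i (schk st1 i ++ [:: j]))
                  (if amortized then upd (spot st) i res.2 else spot st)
                  (PQueue (Q ++ res.1.2)) (sn st))
  | step_raise st j Q :
      sph st = PSearch j Q -> (forall k, ~~ Mtil st j k) ->
      step st (St (xi * sT st) (fun k => shat st k ++ schk st k)
                  (fun _ => [::])
                  (if amortized then (fun _ => 0) else spot st)
                  (PSearch j Q) (sn st)).

Inductive reachable : state R m -> Prop :=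
  | reach_init st : initial st -> reachable st
  | reach_step st st' : reachable st -> step st st' -> reachable st'.

End Algo.

Definition makespan (R : realFieldType) (m n : nat) (s : 'I_m -> R)
  (p : nat -> R) (a : {ffun 'I_n -> 'I_m}) : R :=
  \big[Order.max/0]_(i : 'I_m) \sum_(j : 'I_n | a j == i) p j / s i.

(* The neutral element of the min is the
   maximum makespan, which is >= every makespan, so this is exactly the
   minimum whenever some assignment exists. *)
Definition OPT (R : realFieldType) (m : nat) (s : 'I_m -> R) (p : nat -> R)
  (n : nat) : R :=
  \big[Order.min/ \big[Order.max/0]_(a : {ffun 'I_n -> 'I_m}) makespan s p a]_(a : {ffun 'I_n -> 'I_m})
     makespan s p a.

From HB Require Import structures.
From mathcomp Require Import all_boot all_order all_algebra.
From mathcomp Require Import zify lra.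
Set Implicit Arguments. Unset Strict Implicit. Unset Printing Implicit Defensive.
Import Order.TTheory GRing.Theory Num.Theory.
Local Open Scope ring_scope.

(* Every step except the raise T := xi T keeps T and only adds jobs, so the bound
   xi^-1 T < OPT survives them; for the raise one shows OPT > T at that moment.
   This rests on an invariant of the new jobs: a new job x on machine i has
   p_x / s_u > T for every unsaturated machine u slower than i, because x went to
   a slowest machine of M~(eta, x), and jobs become new only when they are at
   least p_j / eta for the job j being placed.  Let A be the machines faster than
   every unsaturated machine; they are saturated.  If M~(eta, j) is empty, then j
   and the new jobs on A are too large for every machine outside A, so a schedule
   with all loads <= T puts them all on A.  Since every arrived job is held exactly
   once, the new jobs on A alone already fill the capacity T * sum_(i in A) s_i,
   leaving no room for j. *)

Lemma ler_sum_count_mem (R : numDomainType) (I : eqType) (r r' : seq I)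
    (F : I -> R) :
  (forall i, 0 <= F i) -> (forall i, count_mem i r <= count_mem i r')%N ->
  \sum_(i <- r) F i <= \sum_(i <- r') F i.
Proof.
elim: r r' => [|x r IH] r' F_ge0 le_count; first by rewrite big_nil sumr_ge0.
have x_r' : x \in r' by rewrite -has_pred1 has_count (leq_trans _ (le_count x)) //= eqxx.
rewrite (perm_big _ (perm_to_rem x_r')) !big_cons lerD2l IH // => i.
by have := le_count i; rewrite (permP (perm_to_rem x_r')) /=; lia.
Qed.

Lemma count_filterC (T : Type) (a P : pred T) (r : seq T) :
  (count a [seq y <- r | P y] + count a [seq y <- r | ~~ P y] = count a r)%N.
Proof. by elim: r => //= y r <-; case: (P y) => /=; lia. Qed.

Lemma perm_evict (R : realFieldType) (p : nat -> R) pi L :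
  perm_eq ((evict p pi L).1.1 ++ (evict p pi L).1.2) L.
Proof.
elim: L pi => [|y L IH] pi //=; case: ifP => _.
  by move: (IH (pi - p y)); case: evict => [[k e] pi'] /=; rewrite -cat1s perm_catCA perm_cons.
by move: (IH pi); case: evict => [[k e] pi'] /=; rewrite perm_cons.
Qed.

Section Invariant.
Variables (R : realFieldType) (m : nat) (s : 'I_m -> R) (p : nat -> R).
Variables (xi gamma eta : R) (amortized : bool).
Hypothesis m_gt0 : (0 < m)%N.
Hypothesis s_gt0 : forall i, 0 < s i.
Hypothesis s_nonincreasing : forall i j : 'I_m, (i <= j)%N -> s j <= s i.
Hypothesis p_gt0 : forall j, 0 < p j.
Hypothesis xi_gt1 : 1 < xi.
Hypothesis eta_ge1 : 1 <= eta.

Local Notation saturated := (saturated s p).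
Local Notation Mtil := (Mtil s p eta).

Lemma job_load_gt0 j i : 0 < p j / s i.
Proof. by rewrite divr_gt0. Qed.

Lemma job_load_le j u v : s u <= s v -> p j / s v <= p j / s u.
Proof. by move=> le_uv; rewrite ler_pM2l // lef_pV2 ?posrE. Qed.

Lemma job_load_lt j u v : s u < s v -> p j / s v < p j / s u.
Proof. by move=> lt_uv; rewrite ltr_pM2l // ltf_pV2 ?posrE. Qed.

Definition load (a : nat -> 'I_m) n i := \sum_(0 <= x < n | a x == i) p x / s i.

Definition opt_gt c n := forall a : nat -> 'I_m, exists i, c < load a n i.

Lemma load_ge_job a n x : (x < n)%N -> p x / s (a x) <= load a n (a x).
Proof.
move=> x_lt_n; rewrite /load big_mkcond (bigD1_seq x) ?mem_index_iota ?iota_uniq //=.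
by rewrite eqxx lerDl sumr_ge0 // => y _; case: ifP; rewrite // ltW ?job_load_gt0.
Qed.

Lemma load_leS a n i : load a n i <= load a n.+1 i.
Proof.
rewrite /load big_mkcond [leRHS]big_mkcond big_nat_recr //= lerDl.
by case: ifP => // _; rewrite ltW ?job_load_gt0.
Qed.

Lemma opt_gtS c n : opt_gt c n -> opt_gt c n.+1.
Proof.
by move=> gt_c a; have [i lt_ci] := gt_c a; exists i; exact: lt_le_trans (load_leS a n i).
Qed.

Lemma sum_assigned_le a n T (A : pred 'I_m) :
  (forall i, load a n i <= T) ->
  \sum_(0 <= x < n | A (a x)) p x <= T * \sum_(i | A i) s i.
Proof.
move=> load_le; rewrite (partition_big a A) // mulr_sumr; apply: ler_sum => i Ai.
rewrite -ler_pdivrMr // mulr_suml (le_trans _ (load_le i)) // /load.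
by rewrite (eq_bigl (fun x => a x == i)) // => x; rewrite andb_idl // => /eqP ->.
Qed.

Lemma OPT_gt c n : opt_gt c n -> c < OPT s p n.
Proof.
move=> gt_c; pose i0 : 'I_m := Ordinal m_gt0.
have gt_makespan (b : {ffun 'I_n -> 'I_m}) : c < makespan s p b.
  pose a x := if insub x is Some o then b o else i0.
  have [i lt_ci] := gt_c a; apply: lt_le_trans lt_ci (le_trans _ (le_bigmax _ _ i)).
  by rewrite /load big_mkord; under eq_bigl do rewrite /a valK.
apply: lt_bigmin => [|b _]; last exact: gt_makespan.
exact: lt_le_trans (gt_makespan [ffun=> i0]) (le_bigmax _ _ _).
Qed.

Definition phase_jobs ph := match ph with PQueue Q => Q | PSearch j Q => j :: Q end.

Lemma upd_neq (T : Type) (f : 'I_m -> T) i y k : k != i -> upd f i y k = f k.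
Proof. by rewrite /upd => /negbTE ->. Qed.

Lemma upd_eq (T : Type) (f : 'I_m -> T) i y : upd f i y i = y.
Proof. by rewrite /upd eqxx. Qed.

Definition multiplicity (st : state R m) x :=
  (count_mem x (phase_jobs (sph st))
   + \sum_(i < m) (count_mem x (shat st i) + count_mem x (schk st i)))%N.

Lemma multiplicity_local st st' i x :
  (forall k, k != i -> shat st' k = shat st k) ->
  (forall k, k != i -> schk st' k = schk st k) ->
  (count_mem x (phase_jobs (sph st'))
     + (count_mem x (shat st' i) + count_mem x (schk st' i))
   = count_mem x (phase_jobs (sph st))
     + (count_mem x (shat st i) + count_mem x (schk st i)))%N ->
  multiplicity st' x = multiplicity st x.
Proof.
move=> hat_off chk_off local; rewrite /multiplicity (bigD1 i) // [in RHS](bigD1 i) //=.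
under eq_bigr => k k_i do rewrite (hat_off k k_i) (chk_off k k_i).
by rewrite addnA local -addnA.
Qed.

Definition large_new_jobs (st : state R m) := forall i u x,
  x \in schk st i -> s u < s i -> ~~ saturated st u -> sT st < p x / s u.

Lemma large_new_jobs_cat st st' j i extra :
  sT st' = sT st -> schk st' =1 upd (schk st) i (schk st i ++ extra) ->
  (forall k, Mtil st j k -> s i <= s k) ->
  (forall x, x \in extra -> p j <= eta * p x) ->
  large_new_jobs st -> large_new_jobs st'.
Proof.
move=> ET Echk slowest extra_big large_st i' u x.
have unsat (k : 'I_m) : ~~ saturated st' k -> ~~ saturated st k.
  apply: contra; rewrite /saturated /newload ET Echk /upd.
  case: eqP => [->|_] // sat_i; rewrite big_cat (le_trans sat_i) // lerDl.
  by rewrite sumr_ge0 // => y _; rewrite ltW ?job_load_gt0.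
rewrite Echk ET /upd; case: eqP => [->|_]; last first.
  by move=> x_in su /unsat; exact: large_st x_in su.
rewrite mem_cat => /orP[x_in su /unsat|x_extra su /unsat unsat_u].
  exact: large_st x_in su.
have : ~~ Mtil st j u by apply: contraL su => /slowest; rewrite -leNgt.
rewrite /Mtil unsat_u andbT /eligible -ltNge => lt_eta.
have eta_gt0 : 0 < eta by apply: lt_le_trans eta_ge1.
rewrite -(ltr_pM2l eta_gt0) (lt_le_trans lt_eta) // mulrA ler_pM2r ?invr_gt0 //.
exact: extra_big.
Qed.

Record invariant (st : state R m) : Prop := Invariant {
  guess_gt0 : 0 < sT st;
  multiplicityE : forall x, multiplicity st x = (x < sn st)%N;
  new_jobs_large : large_new_jobs st;
  guess_lt_opt : opt_gt (xi^-1 * sT st) (sn st) }.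

Lemma moved_jobs_large j (r : seq nat) x :
  x \in [seq y <- r | eta^-1 * p j <= p y] -> p j <= eta * p x.
Proof. by rewrite mem_filter ler_pdivrMl ?(lt_le_trans ltr01) // => /andP[]. Qed.

Definition above_unsaturated (st : state R m) i :=
  [forall u, ~~ saturated st u ==> (s u < s i)].

Lemma above_unsaturated_saturated st i : above_unsaturated st i -> saturated st i.
Proof. by move=> /forallP /(_ i); apply: contraLR => unsat_i; rewrite unsat_i ltxx. Qed.

Section Raise.
Variables (st : state R m) (j : nat) (Q : seq nat).
Hypothesis inv : invariant st.
Hypothesis phase : sph st = PSearch j Q.
Hypothesis no_candidate : forall k, ~~ Mtil st j k.

Let blocked := j :: flatten [seq schk st k | k <- enum (above_unsaturated st)].

Lemma blocked_large x u : x \in blocked -> ~~ saturated st u -> sT st < p x / s u.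
Proof.
rewrite inE => /orP[/eqP -> | /flattenP[_ /mapP[k k_above ->] x_in]] unsat_u.
  have := no_candidate u; rewrite /Mtil unsat_u andbT /eligible -ltNge.
  by apply: le_lt_trans; rewrite ler_peMl // ltW ?(guess_gt0 inv).
move: k_above; rewrite mem_enum => /forallP /(_ u); rewrite unsat_u /= => su.
exact: (new_jobs_large inv) x_in su unsat_u.
Qed.

Lemma count_blocked x : (count_mem x blocked <= (x < sn st))%N.
Proof.
rewrite -(multiplicityE inv) /multiplicity phase /= -addnA leq_add2l.
rewrite count_flatten sumnE !big_map big_enum /= (leq_trans _ (leq_addl _ _)) //.
rewrite big_mkcond; apply: leq_sum => k _.
by case: ifP => _; rewrite ?leq_addl.
Qed.

Lemma blocked_assigned a x :
  (forall i, load a (sn st) i <= sT st) -> x \in blocked -> above_unsaturated st (a x).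
Proof.
move=> load_le x_blocked; apply/forallP => u; apply/implyP => unsat_u.
have x_lt : (x < sn st)%N.
  have : (0 < count_mem x blocked)%N by rewrite -has_count has_pred1.
  by move/leq_trans/(_ (count_blocked x)); rewrite lt0b.
rewrite ltNge; apply/negP => le_su.
have := le_trans (job_load_le x le_su) (le_trans (load_ge_job a x_lt) (load_le _)).
by rewrite leNgt blocked_large.
Qed.

Lemma sum_blocked_ge :
  p j + sT st * \sum_(i | above_unsaturated st i) s i <= \sum_(x <- blocked) p x.
Proof.
rewrite big_cons lerD2l big_flatten big_map big_enum /= mulr_sumr.
apply: ler_sum => i /above_unsaturated_saturated.
by rewrite /saturated /newload -mulr_suml ler_pdivlMr.
Qed.

Lemma sum_blocked_le a : (forall i, load a (sn st) i <= sT st) ->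
  \sum_(x <- blocked) p x <= \sum_(0 <= x < sn st | above_unsaturated st (a x)) p x.
Proof.
move=> load_le; rewrite -[leRHS]big_filter; apply: ler_sum_count_mem => x; first exact: ltW.
case: (boolP (x \in blocked)) => [x_blocked|/count_memPn -> //].
rewrite [leqRHS]count_uniq_mem ?filter_uniq ?iota_uniq // mem_filter.
by rewrite blocked_assigned // mem_index_iota leq0n count_blocked.
Qed.

Lemma raise_opt_gt : opt_gt (sT st) (sn st).
Proof.
move=> a; case: (boolP [exists i, sT st < load a (sn st) i]) => [/existsP // |].
rewrite negb_exists => /forallP load_gtN.
have load_le i : load a (sn st) i <= sT st by rewrite leNgt load_gtN.
have := sum_assigned_le (above_unsaturated st) load_le.
have := sum_blocked_le load_le; have := sum_blocked_ge; have := p_gt0 j; lra.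
Qed.

End Raise.

Lemma step_invariant st st' :
  step s p xi gamma eta amortized st st' -> invariant st -> invariant st'.
Proof.
case=> [T hat chk pot n | T hat chk pot Q n j j_Q _
  | {}st j Q i phase _ slowest big small st1 _
  | {}st j Q i L phase _ slowest big small st1 _ perm_L _ pi0 res
  | {}st j Q phase no_candidate] [T_gt0 multE large opt].
- split => //=; last exact: opt_gtS.
  move=> x; have := multE x; rewrite /multiplicity /= addn0.
  by case: (ltngtP x n) => [x_n|n_x|->]; rewrite ?eqxx; lia.
- split => //= x; rewrite -multE /multiplicity /=.
  by rewrite (permP (perm_to_rem j_Q)).
- split => //=.
  + move=> x; rewrite -multE; apply: (multiplicity_local (i := i)) => [k|k|]; try exact: upd_neq.
    rewrite phase /= !upd_eq count_cat.
    rewrite -(count_filterC _ (fun y => eta^-1 * p j <= p y) (shat st i)) -/big -/small.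
    lia.
  + apply: (large_new_jobs_cat (i := i) (extra := big) _ _ slowest _ large) => // x.
    exact: moved_jobs_large.
- split => //=.
  + move=> x; rewrite -multE; apply: (multiplicity_local (i := i)) => [k|k k_i|].
    * exact: upd_neq.
    * by rewrite /= !upd_neq.
    rewrite phase /= !upd_eq !count_cat /= addn0.
    rewrite -(count_filterC _ (fun y => eta^-1 * p j <= p y) (shat st i)) -/big -/small.
    rewrite -(permP perm_L) -(permP (perm_evict p pi0 L)) count_cat -/res.
    (* [/=] turns the carrier [Equality.sort nat] left by [permP] back into [nat],
       so that [lia] recognises equal counts as equal atoms. *)
    rewrite /=; lia.
  + apply: (large_new_jobs_cat (extra := big ++ [:: j]) _ _ slowest _ large) => //.
      by move=> k; rewrite /st1 /upd /=; case: eqP => _; rewrite ?eqxx ?catA.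
    move=> x; rewrite mem_cat => /orP[/moved_jobs_large // | ].
    by rewrite inE => /eqP ->; rewrite ler_peMl // ltW.
- split => //=.
  + by rewrite mulr_gt0 // (lt_trans ltr01).
  + move=> x; rewrite -multE /multiplicity phase /=; congr (_ + _)%N.
    by apply: eq_bigr => k _; rewrite count_cat addn0.
  + by rewrite mulKf ?gt_eqF ?(lt_trans ltr01) //; exact: raise_opt_gt phase no_candidate.
Qed.

Lemma initial_invariant st : initial s p st -> invariant st.
Proof.
case=> n1 [phase0 machines]; pose i0 : 'I_m := Ordinal m_gt0.
have [_ [_ /= [chk0 T0]]] := machines i0.
have hat_nil k : shat st k = [::] by case: (machines k).
have chk_nil k : k != i0 -> schk st k = [::].
  move=> k_i0; have [_ [_]] := machines k; case: eqP => // k0.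
  by move: k_i0; have -> : k = i0 by apply: val_inj.
have T_gt0 : 0 < sT st by rewrite T0 job_load_gt0.
split => //.
- move=> x; rewrite /multiplicity phase0 n1 (bigD1 i0) //= hat_nil chk0 big1 => [|k k_i0].
    by case: x.
  by rewrite hat_nil chk_nil.
- move=> i u x; case: (eqVneq i i0) => [->|/chk_nil ->] //.
  by rewrite chk0 inE => /eqP -> su _; rewrite T0 job_load_lt.
- move=> a; exists (a 0%N); rewrite n1; apply: lt_le_trans (load_ge_job a (ltn0Sn 0)).
  apply: (@lt_le_trans _ _ (p 0 / s i0)).
    by rewrite T0 gtr_pMl ?job_load_gt0 // invf_lt1 // (lt_trans ltr01).
  by rewrite job_load_le // s_nonincreasing.
Qed.

Lemma reachable_invariant st :
  reachable s p xi gamma eta amortized st -> invariant st.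
Proof.
elim=> [st0 /initial_invariant // | st0 st1 _ inv0 step01].
exact: step_invariant step01 inv0.
Qed.

End Invariant.

Theorem lemma3 (R : realFieldType) (m : nat) (s : 'I_m -> R) (p : nat -> R)
  (xi gamma eta : R) (amortized : bool) :
  (0 < m)%N ->
  (forall i : 'I_m, 0 < s i) ->
  (forall i j : 'I_m, (i <= j)%N -> s j <= s i) ->
  (forall j, 0 < p j) ->
  1 < xi -> 0 < gamma < 1 -> 1 <= eta ->
  forall st : state R m,
    reachable s p xi gamma eta amortized st ->
    sph st = PQueue [::] ->
    xi^-1 * sT st < OPT s p (sn st).
Proof.
move=> m_gt0 s_gt0 s_nonincreasing p_gt0 xi_gt1 _ eta_ge1 st reach _.
apply: OPT_gt => //.
exact: guess_lt_opt (reachable_invariant m_gt0 s_gt0 s_nonincreasing p_gt0 xi_gt1 eta_ge1 reach).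
Qed.
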